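(* Let $\mathcal{U}$ be a finite set, $\mathbf{a} \in \mathbb{Z}_{\geq 0}^{\mathcal{U}}$ with $F_1 = \sum_{i\in\mathcal{U}} \mathbf{a}_i > 0$, let $k > 0$ with $HH(k) = |\{i \in \mathcal{U} : \mathbf{a}_i \geq F_1/k\}| \geq 1$, let $h$ be a positive integer and $\delta \in (0,1)$. Let $f : \mathcal{U} \to [h]$ be a uniformly random function and \[ \tilde k = \big|\{ j \in [h] : \exists\, i \in f^{-1}(j) \text{ with } \mathbf{a}_i \geq F_1/k \}\big| . \] Then with probability at least $1-\delta$, \[ \frac{\tilde k}{HH(k)} \geq 1 - \frac{k}{\delta h}. \]
   Context: $[h] = \{1,\dots,h\}$. A uniformly random function assigns each element of $\mathcal{U}$ an independent uniform value in $[h]$. *)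

From HB Require Import structures.
From mathcomp Require Import all_boot all_order all_algebra.
Set Implicit Arguments. Unset Strict Implicit. Unset Printing Implicit Defensive.
Import Order.TTheory GRing.Theory Num.Theory.
Local Open Scope ring_scope.

Definition F1 (U : finType) (a : U -> nat) : nat := (\sum_(i : U) a i)%N.

Definition heavy (R : realFieldType) (U : finType) (a : U -> nat) (k : R) (i : U) : bool :=
  (F1 a)%:R / k <= (a i)%:R.

Definition HH (R : realFieldType) (U : finType) (a : U -> nat) (k : R) : nat :=
  #|[set i : U | heavy a k i]|.

Definition ktilde (R : realFieldType) (U : finType) (a : U -> nat) (k : R) (h : nat)
  (f : {ffun U -> 'I_h}) : nat :=
  #|[set j : 'I_h | [exists i : U, (f i == j) && heavy a k i]]|.

Definition unif_prob (R : realFieldType) (U : finType) (h : nat)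
  (E : pred {ffun U -> 'I_h}) : R :=
  #|[set f | E f]|%:R / #|{ffun U -> 'I_h}|%:R.

From HB Require Import structures.
From mathcomp Require Import all_boot all_order all_algebra all_fingroup.
From mathcomp Require Import lra.
Set Implicit Arguments. Unset Strict Implicit. Unset Printing Implicit Defensive.
Import Order.TTheory GRing.Theory Num.Theory.

(* Let [H] be the set of heavy hitters and [m = |H| <= k].  The buckets
   holding a heavy hitter number at least [m] minus the number [D] of ordered
   pairs of distinct heavy hitters sharing a bucket.  Each such pair collides
   with probability [1/h], so [E D <= m^2/h], and by Markov's inequality
   [D >= m^2/(delta h)] has probability at most [delta].  Outside this event
   [ktilde >= m - m^2/(delta h) >= m (1 - k/(delta h))]. *)

Section Collisions.

Variables (U T : finType).

Definition collisions (H : {set U}) (f : U -> T) : nat :=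
  \sum_(i in H) \sum_(j in H | j != i) (f i == f j).

(* Every element of [H] not counted by a collision is mapped injectively. *)
Lemma card_le_imset_collisions (H : {set U}) (f : U -> T) :
  (#|H| <= #|f @: H| + collisions H f)%N.
Proof.
set Y := [set i in H | [exists j, [&& j \in H, j != i & f j == f i]]].
have YH : Y \subset H by apply/subsetP=> i; rewrite inE => /andP[].
rewrite -(cardsID Y H) (setIidPr YH) addnC leq_add //.
  rewrite -(card_in_imset (f := f)); first by apply/subset_leq_card/imsetS/subsetDl.
  move=> x y; rewrite !inE => /andP[xY xH] /andP[_ yH] fxy.
  apply/eqP; apply: contraNT xY => nxy; rewrite xH /=.
  by apply/existsP; exists y; rewrite yH eq_sym nxy fxy eqxx.
rewrite -sum1_card /collisions [X in (_ <= X)%N]big_mkcond [X in (X <= _)%N]big_mkcond.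
apply: leq_sum => i _; case: (boolP (i \in Y)) => // iY.
move: iY; rewrite inE => /andP[-> /existsP[j /and3P[jH nji fji]]].
by rewrite (bigD1 j) ?jH //= (eqP fji) eqxx.
Qed.

End Collisions.

(* Swapping the values [g i] and [c] at [j] is an involution of the
   function space carrying the event [g i == g j] onto [g j == c]. *)
Lemma ffun_eq_pair_count (U : finType) (h : nat) (i j : U) : i != j ->
  (h * \sum_(g : {ffun U -> 'I_h}) (g i == g j : nat) = #|{ffun U -> 'I_h}|)%N.
Proof.
move=> nij.
have eq_count c : (\sum_(g : {ffun U -> 'I_h}) (g i == g j : nat) =
                   \sum_(g : {ffun U -> 'I_h}) (g j == c : nat))%N.
  pose swap (g : {ffun U -> 'I_h}) : {ffun U -> 'I_h} :=
    [ffun x => if x == j then tperm (g i) c (g j) else g x].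
  have swapK : involutive swap.
    move=> g; apply/ffunP=> x; rewrite !ffunE.
    by case: eqP => [->|//]; rewrite (negbTE nij) eqxx tpermK.
  rewrite (reindex_inj (inv_inj swapK)); apply: eq_bigr => g _.
  rewrite !ffunE (negbTE nij) eqxx.
  by rewrite -(inj_eq (@perm_inj _ (tperm (g i) c))) tpermL tpermK eq_sym.
transitivity (\sum_(c < h) \sum_(g : {ffun U -> 'I_h}) (g j == c : nat))%N.
  by rewrite -(eq_bigr _ (fun c _ => eq_count c)) sum_nat_const card_ord.
rewrite exchange_big /= -sum1_card; apply: eq_bigr => g _.
by rewrite (bigD1 (g j)) //= eqxx big1 // => c /negbTE; rewrite eq_sym => ->.
Qed.

Lemma sum_collisions (U : finType) (h : nat) (H : {set U}) :
  (h * \sum_(f : {ffun U -> 'I_h}) collisions H f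
     <= #|H| * #|H| * #|{ffun U -> 'I_h}|)%N.
Proof.
rewrite /collisions exchange_big big_distrr -mulnA -sum_nat_const.
apply: leq_sum => i _.
rewrite exchange_big big_distrr -sum_nat_const big_mkcondr.
apply: leq_sum => j _; case: eqP => [-> //|/eqP nji] /=.
by rewrite ffun_eq_pair_count // eq_sym.
Qed.

Local Open Scope ring_scope.

Lemma ktildeE (R : realFieldType) (U : finType) (a : U -> nat) (k : R) (h : nat)
    (f : {ffun U -> 'I_h}) :
  ktilde a k f = #|f @: [set i | heavy a k i]|.
Proof.
apply: eq_card => j; rewrite inE.
apply/existsP/imsetP => [[i /andP[/eqP <- hi]]|[i hi ->]].
  by exists i; rewrite ?inE.
by exists i; rewrite eqxx; rewrite inE in hi.
Qed.

Lemma HH_le (R : realFieldType) (U : finType) (a : U -> nat) (k : R) :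
  (0 < F1 a)%N -> 0 < k -> (HH a k)%:R <= k.
Proof.
move=> F1gt0 kgt0; set H := [set i | heavy a k i].
have F1R : (0 : R) < (F1 a)%:R by rewrite ltr0n.
have : (HH a k)%:R * ((F1 a)%:R / k) <= (F1 a)%:R :> R.
  rewrite mulr_natl -sumr_const.
  apply: (le_trans (y := \sum_(i in H) (a i)%:R)).
    by apply: ler_sum => i; rewrite inE.
  rewrite /F1 natr_sum [X in _ <= X](bigID (mem H)) /= lerDl.
  exact: sumr_ge0.
by rewrite mulrA ler_pdivrMr // mulrC ler_pM2l.
Qed.

Section UniformProbability.

Variables (R : realFieldType) (U : finType) (h : nat).
Hypothesis h_gt0 : (0 < h)%N.

Let N := #|{ffun U -> 'I_h}|.

Lemma card_ffun_gt0 : (0 < N)%N.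
Proof. by apply/card_gt0P; exists [ffun=> Ordinal h_gt0]. Qed.

Lemma unif_probC (E : pred {ffun U -> 'I_h}) :
  unif_prob R (predC E) = 1 - unif_prob R E.
Proof.
have NR : N%:R != 0 :> R by rewrite pnatr_eq0 -lt0n card_ffun_gt0.
rewrite /unif_prob -/N -[X in X - _](divff NR) -mulrBl.
have -> : [set f | predC E f] = ~: [set f | E f] by apply/setP=> f; rewrite !inE.
by rewrite /N -(cardsC [set f | E f]) natrD addrC addrK.
Qed.

Lemma le_unif_prob (E E' : pred {ffun U -> 'I_h}) :
  (forall f, E f -> E' f) -> unif_prob R E <= unif_prob R E'.
Proof.
move=> EE'; rewrite ler_pM2r ?invr_gt0 ?ltr0n ?card_ffun_gt0 // ler_nat.
by apply/subset_leq_card/subsetP=> f; rewrite !inE => /EE'.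
Qed.

Lemma unif_prob_markov (D : {ffun U -> 'I_h} -> nat) (t : R) :
  unif_prob R (fun f => t <= (D f)%:R) * t <= (\sum_f D f)%:R / N%:R.
Proof.
rewrite /unif_prob mulrAC ler_pM2r ?invr_gt0 ?ltr0n ?card_ffun_gt0 //.
rewrite mulr_natl -sumr_const natr_sum [X in _ <= X](bigID (mem [set f | t <= (D f)%:R])) /=.
rewrite -[X in X <= _]addr0 lerD ?sumr_ge0 //.
by apply: ler_sum => f; rewrite inE.
Qed.

End UniformProbability.

Theorem lemma6 (R : realFieldType) (U : finType) (a : U -> nat) (k : R) (h : nat)
  (delta : R) :
  (0 < F1 a)%N -> 0 < k -> (1 <= HH a k)%N -> (0 < h)%N ->
  0 < delta -> delta < 1 ->
  1 - delta <=
    unif_prob R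
      (fun f : {ffun U -> 'I_h} =>
         1 - k / (delta * h%:R) <= (ktilde a k f)%:R / (HH a k)%:R).
Proof.
move=> F1gt0 kgt0 HHgt0 hgt0 dgt0 _.
set H := [set i | heavy a k i]; set m := HH a k.
set x := delta * h%:R; set E := fun f => _; set t := m%:R * m%:R / x.
have hR : (0 : R) < h%:R by rewrite ltr0n.
have mR : (0 : R) < m%:R by rewrite ltr0n.
have xgt0 : 0 < x by rewrite mulr_gt0.
have mk : m%:R <= k := HH_le F1gt0 kgt0.
have tdelta : t * delta = m%:R * m%:R / h%:R.
  by rewrite /t /x invfM -!mulrA [_^-1 * delta]mulrC mulKf ?gt_eqF.
have mean : (\sum_(f : {ffun U -> 'I_h}) collisions H f)%:R / #|{ffun U -> 'I_h}|%:R
    <= t * delta.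
  rewrite tdelta ler_pdivrMr ?ltr0n ?card_ffun_gt0 // mulrAC ler_pdivlMr //.
  by rewrite mulrC -!natrM ler_nat sum_collisions.
have bad f : ~~ E f -> t <= (collisions H f)%:R.
  move=> nEf.
  have cover : m%:R <= (ktilde a k f)%:R + (collisions H f)%:R :> R.
    by rewrite -natrD ler_nat ktildeE; apply: card_le_imset_collisions.
  have kt_lt : (ktilde a k f)%:R < m%:R - k / x * m%:R.
    by move: nEf; rewrite /E -ltNge ltr_pdivrMr // mulrBl mul1r.
  have : k / x * m%:R < (collisions H f)%:R by lra.
  rewrite mulrAC ltr_pdivrMr // => km_lt.
  have : m%:R * m%:R <= k * m%:R :> R by rewrite ler_pM2r.
  rewrite /t ler_pdivrMr //; lra.
have tgt0 : 0 < t by rewrite divr_gt0 ?mulr_gt0.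
have : unif_prob R (predC E) * t <= delta * t.
  rewrite [delta * t]mulrC.
  apply: le_trans (le_trans (unif_prob_markov hgt0 (collisions H) t) mean).
  by rewrite ler_pM2r //; apply: le_unif_prob => // f /bad.
by rewrite ler_pM2r // unif_probC //; lra.
Qed.
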